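(* Let $G$ be an execution graph, $T$ a thread and $q$ an await-iteration index of $T$ with $\mathit{fail}_G^T(q)$, and let $n=\mathit{len}_G^T(q)$. Then $k_G^T(\mathit{end}_G^T(q)+1)=k_G^T(\mathit{start}_G^T(q))$, $\mathit{start}_G^T(q+1)=\mathit{end}_G^T(q)+1$, and $\mathit{end}_G^T(q+1)=\mathit{end}_G^T(q)+1+n$.
   Context: Programs. There are finite sets $\mathit{Register}$, $\mathit{Value}$, $\mathit{Location}$; $\mathit{State}=\mathit{Register}\to\mathit{Value}$; an update is a partial map $\mathit{Register}\rightharpoonup\mathit{Value}$, and $(\sigma\ll\mu)(r)=\mu(r)$ if $r\in\mathrm{Dom}(\mu)$, else $\sigma(r)$. Events are reads $R^m(x)$, writes $W^m(x,v)$, fences $F^m$, error $E$. A program consists of finitely many threads $T$, each with a finite statement sequence $P_T(0),\dots,P_T(|P_T|-1)$. A statement is $\mathtt{step}(\epsilon,\delta)$ with $\epsilon:\mathit{State}\to\mathit{Event}$, $\delta:\mathit{State}\times(\mathit{Value}\cup\{\bot\})\to\mathit{Update}$, or $\mathtt{await}(n,\kappa)$ with $n\in\mathbb N$, $\kappa:\mathit{State}\to\{0,1\}$. Syntactic restriction: if $P_T(k)=\mathtt{await}(n,\cdot)$ then $n\le k$ and no $P_T(k')$ with $k'\in[k-n:k)$ is an await. ($[a:b)=\{a,\dots,b-1\}$.) An execution graph $G$ has a set $G.\mathrm E$ of triples $\langle T,t,e\rangle$ and a partial reads-from map $G.\mathrm{rf}$ from reads to writes. Thread-local semantics: $k_G^T(0)=0$,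 $\sigma_G^T(0)$ fixed; if $k_G^T(t)\ge|P_T|$ or no triple $\langle T,t,\cdot\rangle$ is in $G.\mathrm E$, execution stops ($N_G^T=t$). Otherwise with $S=P_T(k_G^T(t))$: $e_G^T(t)=\epsilon(\sigma_G^T(t))$ for $S=\mathtt{step}(\epsilon,\cdot)$, $F^{\mathrm{rlx}}$ for an await; $v_G^T(t)$ is the value of the write that $G.\mathrm{rf}$ assigns to $\langle T,t,e_G^T(t)\rangle$ if this is a read with defined rf, else $\bot$. For a step: $k_G^T(t+1)=k_G^T(t)+1$; if $e_G^T(t)$ is a read with $v_G^T(t)=\bot$ then $N_G^T=t+1$, $\sigma_G^T(t+1)=\sigma_G^T(t)$, else $\sigma_G^T(t+1)=\sigma_G^T(t)\ll\delta(\sigma_G^T(t),v_G^T(t))$. For $\mathtt{await}(n,\kappa)$: $\sigma_G^T(t+1)=\sigma_G^T(t)$ and $k_G^T(t+1)=k_G^T(t)+1$ if $\kappa(\sigma_G^T(t))=0$, else $k_G^T(t)-n$. Awaits: $\mathit{end}_G^T(0)<\mathit{end}_G^T(1)<\cdots$ enumerate the steps $t$ (with $t<N_G^T$) at which $P_T(k_G^T(t))$ is an await; $\mathit{len}_G^T(q)=n$ where $P_T(k_G^T(\mathit{end}_G^T(q)))=\mathtt{await}(n,\kappa)$; $\mathit{start}_G^T(q)=\mathit{end}_G^T(q)-\mathit{len}_G^T(q)$; iteration $q$ failed, $\mathit{fail}_G^T(q)$, iff $\kappa(\sigma_G^T(\mathit{end}_G^T(q)))=1$. *)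

From mathcomp Require Import all_boot.

Set Implicit Arguments.
Unset Strict Implicit.
Unset Printing Implicit Defensive.

(* Access modes of events. Only [Rlx] is used by the semantics (awaits emit F^rlx). *)
Inductive mode := NA | Rlx | Acq | Rel | AcqRel | SC.

Section Defs.

Variables (Reg Val Loc Thread : finType).

Definition state := Reg -> Val.
Definition update := Reg -> option Val.

Definition upd (s : state) (mu : update) : state :=
  fun r => match mu r with Some v => v | None => s r end.

Inductive event :=
| ERead  of mode & Loc
| EWrite of mode & Loc & Val
| EFence of mode
| EError.

Definition is_read (e : event) : bool :=
  if e is ERead _ _ then true else false.
Definition is_write (e : event) : bool :=
  if e is EWrite _ _ _ then true else false.

(* step(eps, delta) with delta : State x (Value u {bot}) -> Update;
   await(n, kappa) with kappa : State -> {0,1} (true = 1). *)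
Inductive stmt :=
| Step  of (state -> event) & (state -> option Val -> update)
| Await of nat & (state -> bool).

Definition is_await (o : option stmt) : bool :=
  if o is Some (Await _ _) then true else false.

Definition program := Thread -> seq stmt.

Definition wf_program (P : program) : Prop :=
  forall T k n kappa, onth (P T) k = Some (Await n kappa) ->
    n <= k /\ (forall k', k - n <= k' < k -> ~~ is_await (onth (P T) k')).

Definition triple := (Thread * nat * event)%type.

Record graph := Graph {
  gE  : triple -> Prop;
  grf : triple -> option triple
}.

Definition rf_wf (G : graph) : Prop :=
  forall a b, grf G a = Some b ->
    [/\ gE G a, gE G b, is_read a.2 & is_write b.2].

Section Thread_semantics.
Variables (P : program) (sigma0 : Thread -> state) (G : graph) (T : Thread).

Definition stmt_at (k : nat) : option stmt := onth (P T) k.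

Definition cur_event (k : nat) (s : state) : event :=
  match stmt_at k with
  | Some (Step eps _) => eps s
  | _ => EFence Rlx
  end.

Definition read_val (t : nat) (e : event) : option Val :=
  if is_read e then
    match grf G (T, t, e) with
    | Some (_, _, EWrite _ _ v) => Some v
    | _ => None
    end
  else None.

(* (k_G^T(t), sigma_G^T(t)); computed by recursion (values after the
   thread has stopped are irrelevant). *)
Fixpoint conf (t : nat) : nat * state :=
  match t with
  | 0 => (0, sigma0 T)
  | t'.+1 =>
    let (k, s) := conf t' in
    match stmt_at k with
    | Some (Step eps delta) =>
        let e := eps s in
        let v := read_val t' e in
        if is_read e && (v == None) then (k.+1, s) else (k.+1, upd s (delta s v))
    | Some (Await n kappa) => if kappa s then (k - n, s) else (k.+1, s)
    | None => (k, s)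
    end
  end.

Definition kG (t : nat) : nat := (conf t).1.
Definition sigmaG (t : nat) : state := (conf t).2.
Definition eG (t : nat) : event := cur_event (kG t) (sigmaG t).
Definition vG (t : nat) : option Val := read_val t (eG t).

(* step t is a read that got no value: execution stops after it *)
Definition stuck (t : nat) : bool := is_read (eG t) && (vG t == None).

(* t < N_G^T *)
Definition active (t : nat) : Prop :=
  forall t', t' <= t ->
    [/\ kG t' < size (P T),
        (exists e, gE G (T, t', e)) &
        (forall t'', t' = t''.+1 -> ~~ stuck t'')].

Definition await_step (t : nat) : Prop := active t /\ is_await (stmt_at (kG t)).

(* is_end q t  <->  end_G^T(q) = t  (q-th await step, 0-based) *)
Inductive is_end : nat -> nat -> Prop :=
| is_end0 t : await_step t -> (forall t', t' < t -> ~ await_step t') -> is_end 0 t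
| is_endS q t0 t : is_end q t0 -> t0 < t -> await_step t ->
    (forall t', t0 < t' < t -> ~ await_step t') -> is_end q.+1 t.

Definition len_at (t : nat) : nat :=
  if stmt_at (kG t) is Some (Await n _) then n else 0.
Definition fail_at (t : nat) : bool :=
  if stmt_at (kG t) is Some (Await _ kappa) then kappa (sigmaG t) else false.

End Thread_semantics.
End Defs.

From mathcomp Require Import all_boot.
From mathcomp Require Import zify.

Set Implicit Arguments.
Unset Strict Implicit.
Unset Printing Implicit Defensive.

(* A failed [await(n, κ)] at position k jumps back to k - n.  By the syntactic
   restriction, positions k - n, ..., k - 1 hold plain steps, each of which
   advances the program counter by one.  Hence the counter was k - n exactly n
   steps before the await, it takes the values k - n, ..., k again after the
   jump, and the first await reached afterwards is the same statement at
   position k, n + 1 steps later. *)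

Arguments Await {Reg Val Loc}.

Definition is_step {Reg Val Loc : finType} (o : option (stmt Reg Val Loc)) : bool :=
  if o is Some (Step _ _) then true else false.

Section Program_counter.

Variables (Reg Val Loc Thread : finType).
Variables (P : program Reg Val Loc Thread) (sigma0 : Thread -> state Reg Val).
Variables (G : graph Val Loc Thread) (T : Thread).

Lemma kG_succ t :
  kG P sigma0 G T t.+1 =
  match stmt_at P T (kG P sigma0 G T t) with
  | Some (Step _ _) => (kG P sigma0 G T t).+1
  | Some (Await m kap) =>
      if kap (sigmaG P sigma0 G T t) then kG P sigma0 G T t - m
      else (kG P sigma0 G T t).+1
  | None => kG P sigma0 G T t
  end.
Proof.
rewrite /kG /sigmaG /=; case: conf => k s /=.
case: stmt_at => [[eps delta|m kap]|] //=; by [case: ifP | case: (kap s)].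
Qed.

Lemma kG_succ_step t :
  is_step (stmt_at P T (kG P sigma0 G T t)) ->
  kG P sigma0 G T t.+1 = (kG P sigma0 G T t).+1.
Proof. by rewrite kG_succ; case: stmt_at => [[]|]. Qed.

Lemma kG_succ_fail t n kap :
  stmt_at P T (kG P sigma0 G T t) = Some (Await n kap) ->
  kap (sigmaG P sigma0 G T t) ->
  kG P sigma0 G T t.+1 = kG P sigma0 G T t - n.
Proof. by move=> Hk Hkap; rewrite kG_succ Hk Hkap. Qed.

Lemma kG_le t : kG P sigma0 G T t <= t.
Proof.
elim: t => [|t IH] //; rewrite kG_succ.
by case: stmt_at => [[eps delta|m kap]|]; try case: ifP; lia.
Qed.

Lemma kG_run_steps t j :
  (forall i, kG P sigma0 G T t <= i < kG P sigma0 G T t + j ->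
     is_step (stmt_at P T i)) ->
  kG P sigma0 G T (t + j) = kG P sigma0 G T t + j.
Proof.
elim: j => [|j IH] steps; first by rewrite !addn0.
have IHj : kG P sigma0 G T (t + j) = kG P sigma0 G T t + j.
  by apply: IH => i /andP[lo hi]; apply: steps; rewrite lo /=; lia.
by rewrite addnS kG_succ_step IHj ?addnS //; apply: steps; lia.
Qed.

Lemma active_le t t' : active P sigma0 G T t -> t' <= t -> active P sigma0 G T t'.
Proof. by move=> act le_t't t'' le_t''t'; apply: act; apply: leq_trans le_t't. Qed.

Lemma is_end_uniq q t1 t2 :
  is_end P sigma0 G T q t1 -> is_end P sigma0 G T q t2 -> t1 = t2.
Proof.
move=> H; elim: H t2 => [t aw least | q' t0 t _ IH lt aw gap] t2 H2.
- inversion H2 as [t2' aw2 least2 E1 E2|]; subst.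
  by case: (ltngtP t t2) => // c; [case: (least2 t) | case: (least t2)].
- inversion H2 as [|q2 t3 t2' H1 lt2 aw2 gap2 E1 E2]; subst.
  have e := IH _ H1; subst t3.
  case: (ltngtP t t2) => // c; exfalso.
  + by apply: (gap2 t) => //; rewrite lt c.
  + by apply: (gap t2) => //; rewrite lt2 c.
Qed.

Lemma is_end_next q t0 t1 t :
  is_end P sigma0 G T q t0 -> t0 < t1 ->
  is_await (stmt_at P T (kG P sigma0 G T t1)) ->
  (forall t', t0 < t' < t1 -> ~ await_step P sigma0 G T t') ->
  is_end P sigma0 G T q.+1 t -> t = t1.
Proof.
move=> end0 lt01 aw1 gap1 endt.
inversion endt as [|q' t0' t' end0' lt0 [act aw] gap]; subst.
have e := is_end_uniq end0 end0'; subst t0'.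
case: (ltngtP t t1) => // c; exfalso.
- by apply: (gap1 t); rewrite ?lt0 ?c //; split.
- by apply: (gap t1); rewrite ?lt01 ?c //; split => //; apply: active_le act (ltnW c).
Qed.

Lemma failed_await_stmt t :
  await_step P sigma0 G T t -> fail_at P sigma0 G T t ->
  exists kap, stmt_at P T (kG P sigma0 G T t) = Some (Await (len_at P sigma0 G T t) kap)
              /\ kap (sigmaG P sigma0 G T t).
Proof.
rewrite /len_at /fail_at => -[_].
by case: stmt_at => [[eps delta|m kap]|] //= _ Hkap; exists kap.
Qed.

Hypothesis wfP : wf_program P.

Lemma await_window_step k n kap i :
  stmt_at P T k = Some (Await n kap) -> k - n <= i < k -> is_step (stmt_at P T i).
Proof.
move=> Hk win; have [_ no_await] := wfP Hk.
have lt_k_size : k < size (P T) by rewrite -onthTE -/(stmt_at P T k) Hk.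
have : onth (P T) i by rewrite onthTE; lia.
by move: (no_await i win); rewrite /stmt_at; case: onth => [[]|].
Qed.

(* Going backwards inside the window of an await, the counter can only have
   come from the previous position: a jump landing there would come from an
   await inside the window, or jump over the await at k, or be the await at k
   itself, which lands at k - n. *)
Lemma kG_pred_in_window k n kap t :
  stmt_at P T k = Some (Await n kap) ->
  k - n < kG P sigma0 G T t.+1 <= k ->
  kG P sigma0 G T t = (kG P sigma0 G T t.+1).-1.
Proof.
move=> Hk; have step_win := await_window_step Hk.
rewrite kG_succ; set k' := kG P sigma0 G T t.
case E: (stmt_at P T k') => [[eps delta|m kap']|] //.
- case: ifP => // _ /andP[lo hi]; exfalso.
  have [le_mk' no_await] := wfP E.
  case: (ltngtP k' k) => c.
  + suff: is_step (stmt_at P T k') by rewrite E.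
    by apply: step_win; lia.
  + suff: ~~ is_await (stmt_at P T k) by rewrite Hk.
    by apply: no_await; lia.
  + by move: E; rewrite c Hk => -[em _]; lia.
- move=> /andP[lo hi]; exfalso.
  move: hi; rewrite leq_eqVlt => /orP[/eqP ek | lt_k'k].
  + by move: E; rewrite ek Hk.
  + suff: is_step (stmt_at P T k') by rewrite E.
    by apply: step_win; lia.
Qed.

Lemma kG_await_window_back k n kap t j :
  stmt_at P T k = Some (Await n kap) -> kG P sigma0 G T t = k -> j <= n ->
  kG P sigma0 G T (t - j) = k - j.
Proof.
move=> Hk Ht; have [le_nk _] := wfP Hk; have le_kt := kG_le t; rewrite Ht in le_kt.
elim: j => [|j IH] lt_jn; first by rewrite !subn0.
have IHj := IH (ltnW lt_jn).
have Esucc : t - j = (t - j.+1).+1 by lia.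
rewrite Esucc in IHj.
by rewrite (kG_pred_in_window Hk) IHj; lia.
Qed.

Lemma kG_after_failed_await t n kap j :
  stmt_at P T (kG P sigma0 G T t) = Some (Await n kap) ->
  kap (sigmaG P sigma0 G T t) -> j <= n ->
  kG P sigma0 G T (t.+1 + j) = kG P sigma0 G T t - n + j.
Proof.
move=> Hk Hkap le_jn; rewrite kG_run_steps (kG_succ_fail Hk Hkap) // => i win.
have [le_nk _] := wfP Hk.
by apply: (await_window_step Hk); lia.
Qed.

Lemma no_await_step_in_rerun t n kap j :
  stmt_at P T (kG P sigma0 G T t) = Some (Await n kap) ->
  kap (sigmaG P sigma0 G T t) -> j < n ->
  ~ await_step P sigma0 G T (t.+1 + j).
Proof.
move=> Hk Hkap lt_jn [_]; have [le_nk _] := wfP Hk.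
rewrite (kG_after_failed_await Hk Hkap (ltnW lt_jn)).
suff: is_step (stmt_at P T (kG P sigma0 G T t - n + j)) by case: stmt_at => [[]|].
by apply: (await_window_step Hk); lia.
Qed.

End Program_counter.

Theorem lemma4 (Reg Val Loc Thread : finType)
  (P : program Reg Val Loc Thread) (sigma0 : Thread -> state Reg Val)
  (G : graph Val Loc Thread) (T : Thread) (q te : nat) :
  wf_program P -> rf_wf G ->
  is_end P sigma0 G T q te ->
  fail_at P sigma0 G T te ->
  let n := len_at P sigma0 G T te in
  kG P sigma0 G T te.+1 = kG P sigma0 G T (te - n) /\
  (forall te', is_end P sigma0 G T q.+1 te' ->
     te' - len_at P sigma0 G T te' = te.+1 /\ te' = te.+1 + n).
Proof.
move=> wfP _ end_te fail_te n.
have aw_te : await_step P sigma0 G T te by case: end_te.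
have [kap [Hk Hkap]] := failed_await_stmt aw_te fail_te.
set k := kG P sigma0 G T te in Hk.
have [le_nk _] := wfP _ _ _ _ Hk.
split.
  by rewrite (kG_succ_fail Hk Hkap) (kG_await_window_back wfP Hk erefl (leqnn n)).
have back_at_k : kG P sigma0 G T (te.+1 + n) = k.
  by rewrite (kG_after_failed_await wfP Hk Hkap (leqnn n)) subnK.
move=> te' end_te'.
have -> : te' = te.+1 + n.
  apply: (is_end_next end_te _ _ _ end_te'); rewrite ?back_at_k ?Hk //; first lia.
  move=> t' win; have -> : t' = te.+1 + (t' - te.+1) by lia.
  by apply: (no_await_step_in_rerun wfP Hk Hkap); lia.
by rewrite /len_at back_at_k Hk addnK.
Qed.
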